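(* Let $(N,M_0)$ be a three-level PT-net system with transitions $T$ partitioned into low-level $L$, downgrading $D$ and high-level $H$. Then $(N,M_0)$ has the property BINI if and only if for every reachable marking $M_1$ of $(N,M_0)$ and every $h\in H$, $M_1[h\rangle M_2$ implies $\mathcal{L}(N\setminus(H\cup D),M_1)=\mathcal{L}(N\setminus(H\cup D),M_2)$.
   Context: A PT-net is $N=(P,T,F)$ with $P,T$ finite disjoint and $F:(P\times T)\cup(T\times P)\to\mathbb{N}$; markings $M:P\to\mathbb{N}$; $t$ enabled at $M$ ($M[t\rangle$) iff $M(p)\ge F(p,t)$ for all $p$, firing gives $M'(p)=M(p)+F(t,p)-F(p,t)$ ($M[t\rangle M'$); extended to sequences. $N\setminus T'$ deletes the transitions of $T'$. $\mathcal{L}(N\setminus(H\cup D),M)$ is the set of all $s\in L^*$ with $M[s\rangle$. For systems with disjoint place sets, $\mathcal{N}_1|\mathcal{N}_2$ has the union of places, the union of transitions (shared transitions synchronize, arcs inherited from each component on its own places), and union of initial markings; a high-level net system has only high-level transitions. In a two-level system (low $L$, high $H$) transitions in $L$ are observable, those in $H$ unobservable; weak bisimilarity $\approx$ is the existence of a relation between reachable markings containing the initial pair such that, for related $(M,M')$ and symmetrically, an observable step $M[l\rangle$ is matched by unobservable steps, $l$, unobservable steps leading to a related pair, and an unobservable step is matched by unobservable steps leading to a related pair. A two-level system $\mathcal{N}$ has BNDC iff for every high-level net system $\mathcal{N}'$ (places disjoint from those of $\mathcal{N}$) with transition set $H'$ disjoint from $L$, $\mathcal{N}\setminus H\approx(\mathcal{N}|\mathcal{N}')\setminus(H\setminus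 H')$. The three-level system $(N,M_0)$ has BINI iff the two-level system $(N\setminus D,M)$ (low $L$, high $H$) has BNDC for $M=M_0$ and for every marking $M$ with $M_0[\upsilon d\rangle M$ in $N$ for some $\upsilon\in T^*$, $d\in D$. *)

From Stdlib Require List.
From mathcomp Require Import all_boot.
Set Implicit Arguments. Unset Strict Implicit. Unset Printing Implicit Defensive.

(* Transition names live in an arbitrary type A (shared name space, so that
   shared transitions of a parallel composition are those with equal names).
   A PT-net over places P: its (finite) transition set is the boolean predicate
   [tr], arc weights F(p,t) = pre p t and F(t,p) = post t p (values of pre/post
   at names outside [tr] are irrelevant: such names can never fire). *)
Record net (P A : Type) := Net {
  tr   : A -> bool;
  pre  : P -> A -> nat;
  post : A -> P -> nat }.

Arguments Net {P A}.

Definition finite_tr P A (N : net P A) : Prop :=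
  exists s : list A, forall a, tr N a -> List.In a s.

Definition step P A (N : net P A) (M : P -> nat) (t : A) (M' : P -> nat) : Prop :=
  tr N t /\ (forall p, pre N p t <= M p) /\
  (forall p, M' p = M p + post N t p - pre N p t).

Inductive fires P A (N : net P A) : (P -> nat) -> seq A -> (P -> nat) -> Prop :=
| fires_nil M : fires N M [::] M
| fires_cons M t M1 s M2 : step N M t M1 -> fires N M1 s M2 -> fires N M (t :: s) M2.

Definition reachable P A (N : net P A) (M0 M : P -> nat) : Prop :=
  exists s, fires N M0 s M.

Definition lang P A (N : net P A) (M : P -> nat) (s : seq A) : Prop :=
  exists M', fires N M s M'.

Definition restrict P A (N : net P A) (X : A -> bool) : net P A :=
  Net (fun a => tr N a && ~~ X a) (pre N) (post N).

Definition par P1 P2 A (N1 : net P1 A) (N2 : net P2 A) : net (P1 + P2)%type A :=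
  Net (fun a => tr N1 a || tr N2 a)
      (fun x a => match x with
                  | inl p => if tr N1 a then pre N1 p a else 0
                  | inr q => if tr N2 a then pre N2 q a else 0 end)
      (fun a x => match x with
                  | inl p => if tr N1 a then post N1 a p else 0
                  | inr q => if tr N2 a then post N2 a q else 0 end).

Definition union_mark P1 P2 (M1 : P1 -> nat) (M2 : P2 -> nat) : (P1 + P2)%type -> nat :=
  fun x => match x with inl p => M1 p | inr q => M2 q end.

Definition tau_star P A (L : A -> bool) (N : net P A) (M M' : P -> nat) : Prop :=
  exists s, all (fun a => ~~ L a) s /\ fires N M s M'.

Definition weak_obs P A (L : A -> bool) (N : net P A) (M : P -> nat) (l : A)
  (M' : P -> nat) : Prop :=
  exists M1 M2, tau_star L N M M1 /\ step N M1 l M2 /\ tau_star L N M2 M'.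

Definition weak_sim P1 P2 A (L : A -> bool) (N1 : net P1 A) (N2 : net P2 A)
  (R : (P1 -> nat) -> (P2 -> nat) -> Prop) : Prop :=
  forall M1 M2, R M1 M2 ->
    (forall l M1', L l -> step N1 M1 l M1' ->
        exists M2', weak_obs L N2 M2 l M2' /\ R M1' M2') /\
    (forall h M1', ~~ L h -> step N1 M1 h M1' ->
        exists M2', tau_star L N2 M2 M2' /\ R M1' M2').

Definition wbisim P1 P2 A (L : A -> bool) (N1 : net P1 A) (M01 : P1 -> nat)
  (N2 : net P2 A) (M02 : P2 -> nat) : Prop :=
  exists R : (P1 -> nat) -> (P2 -> nat) -> Prop,
    (forall M1 M2, R M1 M2 -> reachable N1 M01 M1 /\ reachable N2 M02 M2) /\
    R M01 M02 /\
    weak_sim L N1 N2 R /\ weak_sim L N2 N1 (fun M2 M1 => R M1 M2).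

(* BNDC of the two-level system (N, M0) with low L and high H:
   for every high-level net system (N', M0') with finitely many transitions H',
   none in L, and finitely many places disjoint from those of N,
   N \ H  ~  (N | N') \ (H \ H'). *)
Definition BNDC P A (N : net P A) (L H : A -> bool) (M0 : P -> nat) : Prop :=
  forall (P' : finType) (N' : net P' A) (M0' : P' -> nat),
    finite_tr N' -> (forall a, tr N' a -> ~~ L a) ->
    wbisim L (restrict N H) M0
             (restrict (par N N') (fun a => H a && ~~ tr N' a)) (union_mark M0 M0').

Definition BINI P A (N : net P A) (L D H : A -> bool) (M0 : P -> nat) : Prop :=
  BNDC (restrict N D) L H M0 /\
  forall (v : seq A) (d : A) (M : P -> nat),
    D d -> (exists M1, fires N M0 v M1 /\ step N M1 d M) ->
    BNDC (restrict N D) L H M.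

Definition three_level P A (N : net P A) (L D H : A -> bool) : Prop :=
  finite_tr N /\
  (forall a, tr N a = [|| L a, D a | H a]) /\
  (forall a, ~~ (L a && D a)) /\ (forall a, ~~ (L a && H a)) /\
  (forall a, ~~ (D a && H a)).

From mathcomp Require Import all_boot.
From Stdlib Require Import FunctionalExtensionality.
Set Implicit Arguments. Unset Strict Implicit. Unset Printing Implicit Defensive.

(* Only low transitions survive in N \ (H ∪ D), and firing is deterministic, so a
   marking of N \ (H ∪ D) is determined up to its low language by the low
   projection of the run that reached it.
   (<=) If high steps never change the low language, "same low language of the
   N-part" relates N \ D \ H and every composition (N \ D) | N' by a weak
   bisimulation, whence BNDC at every marking where BINI asks for it.
   (=>) Write the run to M1 as a run of N \ D from its last downgrading point,
   where BNDC holds. Composed with a one-place counter holding exactly as many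
   tokens as the run fires high transitions, N \ D replays the run and ends with
   an empty counter, where it can only move low; the bisimulation then matches
   the end marking with the marking reached by the low projection, with the same
   low language. A high step M1 [h> M2 does not change the low projection, so
   M1 and M2 have the same low language. *)

Definition lang_equiv P A (N : net P A) (M M' : P -> nat) : Prop :=
  forall s, lang N M s <-> lang N M' s.

Section Firing.
Variables (P A : Type) (N : net P A).

Lemma step_det M t M1 M2 : step N M t M1 -> step N M t M2 -> M1 = M2.
Proof.
move=> [_ [_ def_M1]] [_ [_ def_M2]]; apply: functional_extensionality => p.
by rewrite def_M1 def_M2.
Qed.

Lemma fires_nilE M M' : fires N M [::] M' -> M' = M.
Proof. by move=> F; inversion F. Qed.

Lemma fires_consE M t s M' :
  fires N M (t :: s) M' -> exists M1, step N M t M1 /\ fires N M1 s M'.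
Proof. by move=> F; inversion F; exists M1. Qed.

Lemma fires_det M s M1 M2 : fires N M s M1 -> fires N M s M2 -> M1 = M2.
Proof.
elim: s M => [|t s IHs] M F1 F2; first by rewrite (fires_nilE F1) (fires_nilE F2).
have [Ma [Sa Fa]] := fires_consE F1; have [Mb [Sb Fb]] := fires_consE F2.
by rewrite (step_det Sa Sb) in Fa; apply: IHs Fa Fb.
Qed.

Lemma fires_cat M s1 M1 s2 M2 :
  fires N M s1 M1 -> fires N M1 s2 M2 -> fires N M (s1 ++ s2) M2.
Proof.
elim=> [//|M' t Ma s' Mb S _ IH] F2.
by apply: fires_cons S (IH F2).
Qed.

Lemma fires_rcons M s M1 t M2 :
  fires N M s M1 -> step N M1 t M2 -> fires N M (rcons s t) M2.
Proof.
move=> F S; rewrite -cats1; apply: (fires_cat F).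
exact: fires_cons S (fires_nil _ _).
Qed.

Lemma fires_rconsE M s t M' :
  fires N M (rcons s t) M' -> exists M1, fires N M s M1 /\ step N M1 t M'.
Proof.
elim: s M => [|u s IHs] M /= F; have [M1 [S F1]] := fires_consE F.
  by rewrite (fires_nilE F1); exists M; split; first exact: fires_nil.
have [M2 [F2 S2]] := IHs _ F1.
by exists M2; split; first exact: fires_cons S F2.
Qed.

Lemma reachable_refl M : reachable N M M.
Proof. by exists [::]; apply: fires_nil. Qed.

Lemma reachable_trans M1 M2 M3 :
  reachable N M1 M2 -> reachable N M2 M3 -> reachable N M1 M3.
Proof. by move=> [s1 F1] [s2 F2]; exists (s1 ++ s2); apply: fires_cat F1 F2. Qed.

Lemma reachable_step M1 M2 t M3 :
  reachable N M1 M2 -> step N M2 t M3 -> reachable N M1 M3.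
Proof. by move=> [s F] S; exists (rcons s t); apply: fires_rcons F S. Qed.

Lemma lang_cons M t M' s : step N M t M' -> lang N M (t :: s) <-> lang N M' s.
Proof.
move=> S; split=> [[M2 F] | [M2 F]]; last by exists M2; apply: fires_cons S F.
have [M1 [S1 F1]] := fires_consE F.
by exists M2; rewrite (step_det S S1).
Qed.

Lemma lang_equiv_sym M M' : lang_equiv N M M' -> lang_equiv N M' M.
Proof. by move=> E s; split=> /E. Qed.

Lemma lang_equiv_step M M' t M1 :
  lang_equiv N M M' -> step N M t M1 ->
  exists M1', step N M' t M1' /\ lang_equiv N M1 M1'.
Proof.
move=> E S.
have [M2 F] : lang N M' [:: t] by apply/E; exists M1; apply: fires_cons S (fires_nil _ _).
have [M1' [S' _]] := fires_consE F.
exists M1'; split=> // s.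
by rewrite -(lang_cons s S) -(lang_cons s S').
Qed.

Lemma lang_sim (Q : (P -> nat) -> (P -> nat) -> Prop) :
  (forall M M' t M1, Q M M' -> step N M t M1 ->
     exists M1', step N M' t M1' /\ Q M1 M1') ->
  forall M M' s, Q M M' -> lang N M s -> lang N M' s.
Proof.
move=> simQ M M' s; elim: s M M' => [|t s IHs] M M' QMM' [M2 F].
  by exists M'; apply: fires_nil.
have [M1 [S F1]] := fires_consE F; have [M1' [S' Q1]] := simQ _ _ _ _ QMM' S.
by apply/(lang_cons _ S'); apply: IHs Q1 _; exists M2.
Qed.

End Firing.

Lemma tau_star_refl P A (L : A -> bool) (N : net P A) M : tau_star L N M M.
Proof. by exists [::]; split=> //; apply: fires_nil. Qed.

Lemma weak_obs_step P A (L : A -> bool) (N : net P A) M l M' :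
  step N M l M' -> weak_obs L N M l M'.
Proof.
by move=> S; exists M, M'; split; [apply: tau_star_refl | split=> //; apply: tau_star_refl].
Qed.

Lemma step_restrict P A (N : net P A) X M t M' :
  step (restrict N X) M t M' <-> step N M t M' /\ ~~ X t.
Proof.
rewrite /step /=; split=> [[/andP[trt nXt] S] | [[trt S] nXt]]; first by [].
by split=> //; rewrite trt.
Qed.

Lemma fires_restrict P A (N : net P A) X M s M' :
  fires (restrict N X) M s M' -> fires N M s M'.
Proof.
elim=> [M1 | M1 t Ma s' Mb /step_restrict[S _] _ IH]; first exact: fires_nil.
exact: fires_cons S IH.
Qed.

Lemma restrict_restrict P A (N : net P A) X Y :
  restrict (restrict N X) Y = restrict N (fun a => Y a || X a).
Proof.
rewrite /restrict /=; f_equal; apply: functional_extensionality => a.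
by case: (tr N a) (X a) (Y a) => [] [] [].
Qed.

Definition mark_inl P1 P2 (Y : P1 + P2 -> nat) : P1 -> nat := fun p => Y (inl p).
Definition mark_inr P1 P2 (Y : P1 + P2 -> nat) : P2 -> nat := fun q => Y (inr q).

Section Parallel.
Variables (P1 P2 A : Type) (N1 : net P1 A) (N2 : net P2 A).

Lemma step_par_inl Y t Y' :
  step (par N1 N2) Y t Y' ->
  if tr N1 t then step N1 (mark_inl Y) t (mark_inl Y') else mark_inl Y' = mark_inl Y.
Proof.
move=> [trt [pre_le def_Y']]; case: ifP => tr1t.
  split=> //; split=> p; first by have := pre_le (inl p); rewrite /= tr1t.
  by rewrite /mark_inl def_Y' /= tr1t.
by apply: functional_extensionality => p; rewrite /mark_inl def_Y' /= tr1t addn0 subn0.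
Qed.

Lemma step_par_lift Y t M' :
  ~~ tr N2 t -> step N1 (mark_inl Y) t M' ->
  step (par N1 N2) Y t (union_mark M' (mark_inr Y)).
Proof.
move=> /negbTE tr2t [tr1t [pre_le def_M']].
split; first by rewrite /= tr1t.
by split=> -[p | q] /=; rewrite ?tr1t ?tr2t // /mark_inr addn0 subn0.
Qed.

Lemma fires_par_inl Y s Y' :
  fires (par N1 N2) Y s Y' -> reachable N1 (mark_inl Y) (mark_inl Y').
Proof.
elim=> [M | M t Ma s' Mb S _ IH]; first exact: reachable_refl.
have := step_par_inl S; case: ifP => _; last by move <-.
move=> S1; apply: reachable_trans IH.
exact: reachable_step (reachable_refl _ _) S1.
Qed.

End Parallel.

Definition checkpoint P A (N : net P A) (D : A -> bool) (M0 M : P -> nat) : Prop :=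
  M = M0 \/ exists v d M1, D d /\ fires N M0 v M1 /\ step N M1 d M.

Section Checkpoints.
Variables (P A : Type) (N : net P A) (L D H : A -> bool) (M0 : P -> nat).

Lemma BINI_checkpointP :
  BINI N L D H M0 <-> forall M, checkpoint N D M0 M -> BNDC (restrict N D) L H M.
Proof.
split=> [[B0 B1] M [-> // | [v [d [M1 [Dd [F S]]]]]] | B].
  by apply: (B1 v d M Dd); exists M1.
split=> [|v d M Dd [M1 [F S]]]; apply: B; first by left.
by right; exists v, d, M1.
Qed.

Lemma checkpoint_reachable M : checkpoint N D M0 M -> reachable N M0 M.
Proof.
case=> [-> | [v [d [M1 [_ [F S]]]]]]; first exact: reachable_refl.
by apply: reachable_step S; exists v.
Qed.

Lemma reachable_checkpoint M :
  reachable N M0 M -> exists Mg s, checkpoint N D M0 Mg /\ fires (restrict N D) Mg s M.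
Proof.
move=> [s]; elim/last_ind: s M => [|s t IHs] M F.
  by rewrite (fires_nilE F); exists M0, [::]; split; [left | apply: fires_nil].
have [M1 [F1 S]] := fires_rconsE F; have [Mg [sg [cp Fg]]] := IHs _ F1.
case Dt: (D t).
  by exists M, [::]; split; [right; exists s, t, M1 | apply: fires_nil].
exists Mg, (rcons sg t); split=> //.
by apply: fires_rcons Fg _; apply/step_restrict; rewrite Dt.
Qed.

End Checkpoints.

Definition counter A (X : A -> bool) : net unit A := Net X (fun _ _ => 1) (fun _ _ => 0).

Section ThreeLevel.
Variables (A P : Type) (N : net P A) (L D H : A -> bool).
Hypothesis tlN : three_level N L D H.

Local Notation ND := (restrict N D).
Local Notation NL := (restrict N (fun a => H a || D a)).
Local Notation comp N' := (restrict (par ND N') (fun a => H a && ~~ tr N' a)).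

Lemma low_tr a : tr NL a -> L a.
Proof.
have [_ [trN _]] := tlN; rewrite /= trN.
by case: (L a) (D a) (H a) => [] [] [].
Qed.

Lemma high_not_low a : H a -> ~~ L a.
Proof.
have [_ [_ [_ [disjLH _]]]] := tlN.
by move: (disjLH a); case: (L a) (H a) => [] [].
Qed.

Lemma unobservable_high a : tr ND a -> ~~ L a -> H a.
Proof.
have [_ [trN _]] := tlN; rewrite /= trN.
by case: (L a) (D a) (H a) => [] [] [].
Qed.

Lemma step_high M h M' : H h -> step N M h M' -> step ND M h M'.
Proof.
have [_ [_ [_ [_ disjDH]]]] := tlN; move=> Hh S; apply/step_restrict; split=> //.
by move: (disjDH h); rewrite Hh andbT.
Qed.

Lemma step_low M t M' : step NL M t M' <-> step ND M t M' /\ ~~ H t.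
Proof. by rewrite -restrict_restrict step_restrict. Qed.

Lemma tau_star_low M M' : tau_star L NL M M' -> M' = M.
Proof.
move=> [[|t s] [unobs F]]; first exact: fires_nilE F.
have [M1 [[/low_tr Lt _] _]] := fires_consE F.
by move: unobs; rewrite /= Lt.
Qed.

Lemma weak_obs_low M l M' : weak_obs L NL M l M' -> step NL M l M'.
Proof. by move=> [M1 [M2 [/tau_star_low-> [S /tau_star_low->]]]]. Qed.

Lemma step_comp_lift P' (N' : net P' A) Y t M' :
  ~~ tr N' t -> step NL (mark_inl Y) t M' ->
  step (comp N') Y t (union_mark M' (mark_inr Y)).
Proof.
move=> tr't /step_low[S nHt]; apply/step_restrict.
by split; [apply: step_par_lift | rewrite negb_and nHt].
Qed.

Lemma weak_sim_low_trace P2 (N2 : net P2 A) (R : (P -> nat) -> (P2 -> nat) -> Prop)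
    Y s Y' X :
  weak_sim L N2 NL (fun Y X => R X Y) -> fires N2 Y s Y' -> R X Y ->
  exists X', R X' Y' /\ fires NL X (filter L s) X'.
Proof.
move=> sim F; elim: F X => [M | M t Ma s' Mb S _ IH] X RXY.
  by exists X; split=> //; apply: fires_nil.
have [sim_obs sim_unobs] := sim _ _ RXY; rewrite /=.
case Lt: (L t).
  have [X1 [/weak_obs_low S1 R1]] := sim_obs _ _ Lt S.
  by have [X' [R' F']] := IH _ R1; exists X'; split=> //; apply: fires_cons S1 F'.
have [X1 [/tau_star_low-> R1]] := sim_unobs _ _ (negbT Lt) S.
exact: IH.
Qed.

Section HighStepsPreserveLanguage.
Variables (M : P -> nat) (P' : Type) (N' : net P' A) (M0' : P' -> nat).
Hypothesis N'_unobservable : forall a, tr N' a -> ~~ L a.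
Hypothesis high_lang_equiv : forall M1 h M2,
  reachable N M M1 -> H h -> step N M1 h M2 -> lang_equiv NL M1 M2.

Lemma comp_step_low Y l Y' :
  L l -> step (comp N') Y l Y' -> step NL (mark_inl Y) l (mark_inl Y').
Proof.
move=> Ll /step_restrict[SP _].
have tr'l : tr N' l = false by apply/negP => /N'_unobservable; rewrite Ll.
have trl : tr ND l by case: SP; rewrite /= tr'l orbF.
have := step_par_inl SP; rewrite trl => S.
by apply/step_low; split=> //; apply/negP => /high_not_low; rewrite Ll.
Qed.

Lemma comp_step_unobservable Y h Y' :
  ~~ L h -> step (comp N') Y h Y' ->
  mark_inl Y' = mark_inl Y \/ H h /\ step N (mark_inl Y) h (mark_inl Y').
Proof.
move=> nLh /step_restrict[SP _]; have := step_par_inl SP.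
case: ifP => [trh /step_restrict[S _] | _]; last by left.
by right; split; first exact: unobservable_high.
Qed.

Lemma comp_reachable_inl Y :
  reachable (comp N') (union_mark M M0') Y -> reachable N M (mark_inl Y).
Proof.
move=> [s /fires_restrict/fires_par_inl[s' F]].
by exists s'; apply: fires_restrict F.
Qed.

Definition lang_bisim X Y :=
  [/\ reachable NL M X, reachable (comp N') (union_mark M M0') Y
    & lang_equiv NL X (mark_inl Y)].

Lemma low_sim_comp : weak_sim L NL (comp N') lang_bisim.
Proof.
move=> X Y [rX rY eqXY]; split=> [l X1 Ll S | h X1 nLh [/low_tr Lh _]]; last first.
  by rewrite Lh in nLh.
have [M1 [S1 eq1]] := lang_equiv_step eqXY S.
have tr'l : ~~ tr N' l by apply/negP => /N'_unobservable; rewrite Ll.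
have SC := step_comp_lift tr'l S1.
exists (union_mark M1 (mark_inr Y)); split; first exact: weak_obs_step.
by split; [apply: reachable_step S | apply: reachable_step SC |].
Qed.

Lemma comp_sim_low : weak_sim L (comp N') NL (fun Y X => lang_bisim X Y).
Proof.
move=> Y X [rX rY eqXY]; split=> [l Y1 Ll SC | h Y1 nLh SC].
  have [X1 [S1 eq1]] := lang_equiv_step (lang_equiv_sym eqXY) (comp_step_low Ll SC).
  exists X1; split; first exact: weak_obs_step.
  by split; [apply: reachable_step S1 | apply: reachable_step SC | apply: lang_equiv_sym].
exists X; split; first exact: tau_star_refl.
split=> //; first exact: reachable_step SC.
have [-> // | [Hh S]] := comp_step_unobservable nLh SC.
have reachM := comp_reachable_inl rY.
by move=> s; rewrite eqXY; apply: (high_lang_equiv reachM Hh S).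
Qed.

End HighStepsPreserveLanguage.

Lemma BNDC_of_high_lang_equiv M :
  (forall M1 h M2, reachable N M M1 -> H h -> step N M1 h M2 -> lang_equiv NL M1 M2) ->
  BNDC ND L H M.
Proof.
move=> high_lang_equiv P' N' M0' _ N'_unobservable; rewrite restrict_restrict.
exists (lang_bisim M N' M0'); split=> [X Y [] // | ].
split; first by split; [apply: reachable_refl | apply: reachable_refl | ].
split; first exact: low_sim_comp.
exact: comp_sim_low.
Qed.

Section Counter.

Local Notation CH := (comp (counter H)).

Lemma counter_finite : finite_tr (counter H).
Proof.
have [[s fin_s] [trN _]] := tlN.
by exists s => a /= Ha; apply: fin_s; rewrite trN Ha !orbT.
Qed.

Lemma comp_counter_step M t M' q :
  step ND M t M' -> (H t -> 0 < q) ->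
  step CH (union_mark M (fun _ => q)) t (union_mark M' (fun _ => q - H t)).
Proof.
move=> [trt [pre_le def_M']] q_gt0; rewrite /= in trt.
split; first by rewrite /= trt /=; case: (H t).
split=> -[p | u] /=; rewrite ?trt ?def_M' //; first exact: pre_le.
  by case: (H t) q_gt0 => // ->.
by case: (H t); rewrite ?addn0 ?subn0.
Qed.

Lemma comp_counter_fires M s M' q :
  fires ND M s M' -> count H s <= q ->
  fires CH (union_mark M (fun _ => q)) s (union_mark M' (fun _ => q - count H s)).
Proof.
move=> F; elim: F q => [M1 | M1 t Ma s' Mb S _ IH] q /= le_q.
  by rewrite subn0; apply: fires_nil.
have le_Ht : H t <= q by apply: leq_trans le_q; apply: leq_addr.
apply: fires_cons (comp_counter_step S _) _; first by move=> Ht; rewrite Ht in le_Ht.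
by rewrite subnDA; apply: IH; rewrite leq_subRL.
Qed.

Lemma comp_counter_empty_step Y t Y' :
  step CH Y t Y' -> Y (inr tt) = 0 ->
  step NL (mark_inl Y) t (mark_inl Y') /\ Y' (inr tt) = 0.
Proof.
move=> /step_restrict[SP _] Y0.
have nHt : H t = false by case: SP => _ [/(_ (inr tt))]; rewrite /= Y0; case: (H t).
have trt : tr ND t by case: SP; rewrite /= nHt orbF.
have := step_par_inl SP; rewrite trt => S.
split; first by apply/step_low; rewrite nHt.
by case: SP => _ [_ ->]; rewrite /= nHt Y0.
Qed.

Lemma tau_star_comp_counter_empty Y Y' :
  tau_star L CH Y Y' -> Y (inr tt) = 0 -> Y' = Y.
Proof.
move=> [[|t s] [unobs F]] Y0; first exact: fires_nilE F.
have [Y1 [S _]] := fires_consE F.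
have [[/low_tr Lt _] _] := comp_counter_empty_step S Y0.
by move: unobs; rewrite /= Lt.
Qed.

Lemma weak_obs_comp_counter_empty Y t Y' :
  weak_obs L CH Y t Y' -> Y (inr tt) = 0 ->
  step NL (mark_inl Y) t (mark_inl Y') /\ Y' (inr tt) = 0.
Proof.
move=> [Y1 [Y2 [T1 [S T2]]]] Y0.
rewrite (tau_star_comp_counter_empty T1 Y0) in S.
have [S' Y20] := comp_counter_empty_step S Y0.
by rewrite (tau_star_comp_counter_empty T2 Y20).
Qed.

Lemma lang_equiv_comp_counter_empty (R : (P -> nat) -> (P + unit -> nat) -> Prop) X Y :
  weak_sim L NL CH R -> weak_sim L CH NL (fun Y X => R X Y) ->
  R X Y -> Y (inr tt) = 0 -> lang_equiv NL (mark_inl Y) X.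
Proof.
move=> sim sim' RXY Y0.
pose Q X M := exists2 Y, R X Y /\ Y (inr tt) = 0 & mark_inl Y = M.
have simQ X1 M1 t X2 : Q X1 M1 -> step NL X1 t X2 ->
    exists M2, step NL M1 t M2 /\ Q X2 M2.
  move=> [Y1 [RY1 Y10] <-] S.
  have [Y2 [W RY2]] := (sim _ _ RY1).1 _ _ (low_tr S.1) S.
  have [S' Y20] := weak_obs_comp_counter_empty W Y10.
  by exists (mark_inl Y2); split=> //; exists Y2.
have simQ' M1 X1 t M2 : Q X1 M1 -> step NL M1 t M2 ->
    exists X2, step NL X1 t X2 /\ Q X2 M2.
  move=> [Y1 [RY1 Y10] <-] S; have /step_low[_ nHt] := S.
  have SC := step_comp_lift (N' := counter H) nHt S.
  have [X2 [/weak_obs_low S' RX2]] := (sim' _ _ RY1).1 _ _ (low_tr S.1) SC.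
  by exists X2; split=> //; exists (union_mark M2 (mark_inr Y1)).
have QXY : Q X (mark_inl Y) by exists Y.
move=> s; split; first exact: (lang_sim (Q := fun M X => Q X M)) QXY.
exact: (lang_sim (Q := Q)) QXY.
Qed.

End Counter.

Lemma BNDC_low_projection Mg s M :
  BNDC ND L H Mg -> fires ND Mg s M ->
  exists X, fires NL Mg (filter L s) X /\ lang_equiv NL M X.
Proof.
move=> bndc F.
have [R [_ [R0 [sim sim']]]] :=
  bndc _ (counter H) (fun _ => count H s) counter_finite high_not_low.
rewrite restrict_restrict in sim sim'.
have [X [RX FX]] := weak_sim_low_trace sim' (comp_counter_fires F (leqnn _)) R0.
exists X; split=> //; apply: lang_equiv_comp_counter_empty sim sim' RX _.
by rewrite /= subnn.
Qed.

End ThreeLevel.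

Theorem lemma4 (A : Type) (P : finType) (N : net P A) (L D H : A -> bool)
  (M0 : P -> nat) :
  three_level N L D H ->
  (BINI N L D H M0 <->
   (forall (M1 : P -> nat) (h : A) (M2 : P -> nat),
      reachable N M0 M1 -> H h -> step N M1 h M2 ->
      forall s : seq A,
        lang (restrict N (fun a => H a || D a)) M1 s <->
        lang (restrict N (fun a => H a || D a)) M2 s)).
Proof.
move=> tlN; rewrite BINI_checkpointP.
split=> [bndc M1 h M2 reach1 Hh S | high_lang_equiv M cpM].
  have [Mg [sg [cpMg Fg]]] := reachable_checkpoint D reach1.
  have S' := step_high tlN Hh S.
  have [X1 [F1 E1]] := BNDC_low_projection tlN (bndc _ cpMg) Fg.
  have [X2 [F2 E2]] := BNDC_low_projection tlN (bndc _ cpMg) (fires_rcons Fg S').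
  rewrite filter_rcons (negbTE (high_not_low tlN Hh)) in F2.
  rewrite (fires_det F2 F1) in E2.
  by move=> s; rewrite E1 E2.
apply: BNDC_of_high_lang_equiv => // M1 h M2 reach1.
exact/high_lang_equiv/(reachable_trans (checkpoint_reachable cpM)).
Qed.
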